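(* Let $a_1, \dots, a_n \in \mathbb{Z}^d$ be pairwise distinct primitive integer vectors, let $D \subseteq (0,\infty)$ be a dense subset, and for each $w \in \mathbb{Z}^d$ let $f_w : \mathbb{R} \to \mathbb{R}$ be a function. Then there is at most one tuple of real numbers $(b_1, \dots, b_n)$ such that: $P = \bigcap_{i=1}^n \{x \in \mathbb{R}^d : \langle a_i, x\rangle \le b_i\}$ is a full-dimensional polytope; $f_w(s) = L_{P+w}(s)$ for all $w \in \mathbb{Z}^d$ and all $s \in D$; and for each $i$ the set $F_i = P \cap \{x : \langle a_i, x\rangle = b_i\}$ is a nonempty face of $P$.
   Context: For a polytope $P \subseteq \mathbb{R}^d$ and real $s \ge 0$, $L_P(s) = \#(sP \cap \mathbb{Z}^d)$, where $sP = \{sx : x \in P\}$. A vector $a \in \mathbb{Z}^d$ is primitive if the greatest common divisor of its coordinates is $1$. *)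

From Stdlib Require Import Reals ZArith List.
Open Scope R_scope.

(* Vectors in R^d / Z^d are functions nat -> R / nat -> Z of which only the
   coordinates k < d are meaningful. Subsets of R^d are predicates. *)
Definition vecR := nat -> R.
Definition vecZ := nat -> Z.

Fixpoint ip (d : nat) (a x : vecR) : R :=
  match d with
  | O => 0
  | S k => ip k a x + a k * x k
  end.

Definition toR (z : vecZ) : vecR := fun k => IZR (z k).

(* canonical representative of an element of Z^d: zero outside coordinates < d *)
Definition canonZ (d : nat) (z : vecZ) : Prop := forall k, (d <= k)%nat -> z k = 0%Z.

Fixpoint vgcd (d : nat) (a : vecZ) : Z :=
  match d with
  | O => 0%Z
  | S k => Z.gcd (vgcd k a) (a k)
  end.

Definition primitive_vec (d : nat) (a : vecZ) : Prop := vgcd d a = 1%Z.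

Definition in_conv_hull (d : nat) (pts : list vecR) (x : vecR) : Prop :=
  exists lam : list R,
    length lam = length pts /\
    Forall (fun l => 0 <= l) lam /\
    fold_right Rplus 0 lam = 1 /\
    forall k, (k < d)%nat ->
      x k = fold_right Rplus 0 (map (fun p => fst p * (snd p) k) (combine lam pts)).

Definition is_polytope (d : nat) (P : vecR -> Prop) : Prop :=
  exists pts : list vecR,
    forall x, P x <-> in_conv_hull d pts x.

Definition full_dim (d : nat) (P : vecR -> Prop) : Prop :=
  exists (x0 : vecR) (r : R), 0 < r /\
    forall y : vecR, (forall k, (k < d)%nat -> Rabs (y k - x0 k) < r) -> P y.

Definition is_face (d : nat) (P F : vecR -> Prop) : Prop :=
  exists (c : vecR) (delta : R),
    (forall x, P x -> ip d c x <= delta) /\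
    (forall x, F x <-> (P x /\ ip d c x = delta)).

Definition scale (d : nat) (s : R) (P : vecR -> Prop) : vecR -> Prop :=
  fun y => exists x, P x /\ forall k, (k < d)%nat -> y k = s * x k.

Definition translate (d : nat) (P : vecR -> Prop) (w : vecZ) : vecR -> Prop :=
  fun y => exists x, P x /\ forall k, (k < d)%nat -> y k = x k + IZR (w k).

(* lattice_count d P s N :  L_P(s) = #(sP ∩ Z^d) = N *)
Definition lattice_count (d : nat) (P : vecR -> Prop) (s : R) (N : nat) : Prop :=
  exists l : list vecZ,
    NoDup l /\ length l = N /\
    forall z, In z l <-> (canonZ d z /\ scale d s P (toR z)).

Definition Hpoly (d n : nat) (a : nat -> vecZ) (b : nat -> R) : vecR -> Prop :=
  fun x => forall i, (i < n)%nat -> ip d (toR (a i)) x <= b i.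

Definition facet_set (d n : nat) (a : nat -> vecZ) (b : nat -> R) (i : nat) : vecR -> Prop :=
  fun x => Hpoly d n a b x /\ ip d (toR (a i)) x = b i.

Definition admissible (d n : nat) (a : nat -> vecZ) (D : R -> Prop)
    (f : vecZ -> R -> R) (b : nat -> R) : Prop :=
  is_polytope d (Hpoly d n a b) /\
  full_dim d (Hpoly d n a b) /\
  (forall w : vecZ, canonZ d w -> forall s, D s ->
     exists N, lattice_count d (translate d (Hpoly d n a b) w) s N /\ f w s = INR N) /\
  (forall i, (i < n)%nat ->
     is_face d (Hpoly d n a b) (facet_set d n a b i) /\
     exists x, facet_set d n a b i x).

From Stdlib Require Import Reals ZArith List Lra Lia Psatz.
Open Scope R_scope.

(* If b'_i > b_i, the nonempty facet F'_i pushes the full-dimensional P' across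
   the hyperplane <a_i, x> = b_i, so P' contains a small cube on which
   <a_i, x> > b_i, i.e. which misses P.  Take s in D with 1/s slightly above an
   integer N larger than the diameters of P and P'.  The points u/s - u N with
   u integral form a grid of mesh 1/s - N, so for a suitable integral u and
   w := N u the lattice point u lies in s(P' + w) while coming from the cube.
   As s(P + w) and s(P' + w) have diameter < 1 around s w, u is the only
   lattice point either could contain, so s(P + w) contains none and the two
   lattice counts differ. *)

Definition in_cube (d : nat) (c : vecR) (r : R) (v : vecR) : Prop :=
  forall k, (k < d)%nat -> Rabs (v k - c k) < r.

Definition bounded_by (d : nat) (M : R) (x : vecR) : Prop :=
  forall k, (k < d)%nat -> Rabs (x k) <= M.

Definition convex_set (d : nat) (P : vecR -> Prop) : Prop :=
  forall x y t v, P x -> P y -> 0 <= t <= 1 ->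
    (forall k, (k < d)%nat -> v k = (1 - t) * x k + t * y k) -> P v.

Lemma ip_ext d a x y : (forall k, (k < d)%nat -> x k = y k) -> ip d a x = ip d a y.
Proof.
  induction d; simpl; intros H; auto.
  rewrite IHd by (intros; apply H; lia). rewrite (H d) by lia. reflexivity.
Qed.

Lemma ip_lin d a x y p q :
  ip d a (fun k => p * x k + q * y k) = p * ip d a x + q * ip d a y.
Proof. induction d; simpl; [ring|]. rewrite IHd. ring. Qed.

Lemma ip_nonneg d f : (forall k, 0 <= f k) -> 0 <= ip d f (fun _ => 1).
Proof. intros H; induction d; simpl; [lra|]. specialize (H d). lra. Qed.

Lemma ip_diff_le d a x y e :
  (forall k, (k < d)%nat -> Rabs (x k - y k) <= e) ->
  Rabs (ip d a x - ip d a y) <= e * ip d (fun k => Rabs (a k)) (fun _ => 1).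
Proof.
  induction d; simpl; intros H.
  - rewrite Rminus_diag, Rabs_R0. lra.
  - replace (ip d a x + a d * x d - (ip d a y + a d * y d))
      with ((ip d a x - ip d a y) + a d * (x d - y d)) by ring.
    eapply Rle_trans; [apply Rabs_triang|].
    rewrite Rabs_mult.
    assert (Hprefix := IHd (fun k Hk => H k ltac:(lia))).
    assert (Hlast : Rabs (a d) * Rabs (x d - y d) <= Rabs (a d) * e).
    { apply Rmult_le_compat_l; [apply Rabs_pos | apply H; lia]. }
    lra.
Qed.

Lemma ip_gt_near d a x c :
  c < ip d a x -> exists e, 0 < e /\ forall y, in_cube d x e y -> c < ip d a y.
Proof.
  intros Hc.
  set (S := ip d (fun k => Rabs (a k)) (fun _ => 1)).
  assert (HS : 0 <= S) by (apply ip_nonneg; intros; apply Rabs_pos).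
  set (e := (ip d a x - c) / (S + 1)).
  assert (He : 0 < e) by (apply Rdiv_lt_0_compat; lra).
  exists e; split; [exact He|]. intros y Hy.
  assert (Hdiff := ip_diff_le d a y x e (fun k Hk => Rlt_le _ _ (Hy k Hk))).
  fold S in Hdiff.
  assert (HeS : e * S = (ip d a x - c) - e) by (unfold e; field; lra).
  pose proof (Rle_abs (ip d a x - ip d a y)). rewrite Rabs_minus_sym in Hdiff.
  lra.
Qed.

Lemma Hpoly_convex d n a b : convex_set d (Hpoly d n a b).
Proof.
  intros x y t v Hx Hy Ht Hv i Hi.
  rewrite (ip_ext d _ v _ Hv), ip_lin.
  specialize (Hx i Hi). specialize (Hy i Hi).
  assert ((1 - t) * ip d (toR (a i)) x <= (1 - t) * b i) by (apply Rmult_le_compat_l; lra).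
  assert (t * ip d (toR (a i)) y <= t * b i) by (apply Rmult_le_compat_l; lra).
  lra.
Qed.

Lemma convex_cube_toward d P x x0 r t :
  convex_set d P -> (forall v, in_cube d x0 r v -> P v) -> P x -> 0 < t <= 1 ->
  forall v, in_cube d (fun k => (1 - t) * x k + t * x0 k) (t * r) v -> P v.
Proof.
  intros Hconv Hcube Hx Ht v Hv.
  set (x1 := fun k => (v k - (1 - t) * x k) / t).
  assert (Hx1 : P x1).
  { apply Hcube. intros k Hk.
    replace (x1 k - x0 k) with ((v k - ((1 - t) * x k + t * x0 k)) * / t)
      by (unfold x1; field; lra).
    rewrite Rabs_mult, (Rabs_pos_eq (/ t)) by (left; apply Rinv_0_lt_compat; lra).
    apply (Rmult_lt_reg_r t); [lra|]. rewrite Rmult_assoc, Rinv_l by lra.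
    specialize (Hv k Hk). lra. }
  apply (Hconv x x1 t v Hx Hx1); [lra|].
  intros k _. unfold x1. field. lra.
Qed.

Lemma convex_comb_gt p q c :
  c < p -> exists t, 0 < t < 1 /\ c < (1 - t) * p + t * q.
Proof.
  intros Hc.
  set (B := Rabs (p - q)). assert (HB : 0 <= B) by apply Rabs_pos.
  set (t := (p - c) / (2 * (p - c + B))).
  assert (Ht : t * (2 * (p - c + B)) = p - c) by (unfold t; field; lra).
  assert (Htpos : 0 < t) by (unfold t; apply Rdiv_lt_0_compat; lra).
  assert (Hpq : t * (p - q) <= t * B) by (apply Rmult_le_compat_l; [lra | apply Rle_abs]).
  exists t. nra.
Qed.

(* The deep point is on the segment from x towards the centre of the interior
   cube, close enough to x that the linear form stays above c. *)
Lemma full_dim_cube_above d P a x c :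
  convex_set d P -> full_dim d P -> P x -> c < ip d a x ->
  exists y rho, 0 < rho /\ forall v, in_cube d y rho v -> P v /\ c < ip d a v.
Proof.
  intros Hconv [x0 [r [Hr Hcube]]] Hx Hc.
  destruct (convex_comb_gt (ip d a x) (ip d a x0) c Hc) as [t [Ht Hty]].
  set (y := fun k => (1 - t) * x k + t * x0 k).
  assert (Hy : c < ip d a y) by (unfold y; rewrite ip_lin; exact Hty).
  destruct (ip_gt_near d a y c Hy) as [e [He Hnear]].
  exists y, (Rmin (t * r) e). split.
  - apply Rmin_pos; nra.
  - intros v Hv. split.
    + apply (convex_cube_toward d P x x0 r t Hconv Hcube Hx ltac:(lra)).
      intros k Hk. specialize (Hv k Hk). pose proof (Rmin_l (t * r) e). unfold y in Hv. lra.
    + apply Hnear. intros k Hk. specialize (Hv k Hk). pose proof (Rmin_r (t * r) e). lra.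
Qed.

Lemma finite_bound d (f : nat -> R) :
  exists M, 0 <= M /\ forall k, (k < d)%nat -> f k <= M.
Proof.
  induction d as [|d [M [HM Hf]]].
  - exists 0. split; [lra | intros; lia].
  - exists (Rmax M (f d)). split.
    + eapply Rle_trans; [exact HM | apply Rmax_l].
    + intros k Hk. destruct (Nat.eq_dec k d) as [->|Hne]; [apply Rmax_r|].
      eapply Rle_trans; [apply Hf; lia | apply Rmax_l].
Qed.

Lemma points_bounded d (pts : list vecR) :
  exists M, 0 <= M /\ forall p, In p pts -> bounded_by d M p.
Proof.
  induction pts as [|p pts [M [HM Hpts]]].
  - exists 0. split; [lra | intros p []].
  - destruct (finite_bound d (fun k => Rabs (p k))) as [M' [HM' Hp]].
    exists (Rmax M M'). split; [eapply Rle_trans; [exact HM | apply Rmax_l]|].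
    intros q [<-|Hq] k Hk.
    + eapply Rle_trans; [apply Hp; exact Hk | apply Rmax_r].
    + eapply Rle_trans; [apply Hpts; assumption | apply Rmax_l].
Qed.

Lemma fold_Rplus_nonneg (lam : list R) :
  Forall (fun l => 0 <= l) lam -> 0 <= fold_right Rplus 0 lam.
Proof. induction 1; simpl; lra. Qed.

Lemma hull_coord_bound k C (lam : list R) (pts : list vecR) :
  0 <= C -> (forall p, In p pts -> Rabs (p k) <= C) -> Forall (fun l => 0 <= l) lam ->
  Rabs (fold_right Rplus 0 (map (fun p => fst p * (snd p) k) (combine lam pts)))
   <= fold_right Rplus 0 lam * C.
Proof.
  revert pts; induction lam as [|l lam IH]; intros pts HC Hpts Hlam; simpl.
  - rewrite Rabs_R0. lra.
  - inversion Hlam as [|? ? Hl Hlam']; subst.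
    destruct pts as [|p pts]; simpl.
    + rewrite Rabs_R0. pose proof (fold_Rplus_nonneg lam Hlam'). nra.
    + eapply Rle_trans; [apply Rabs_triang|].
      rewrite Rabs_mult, (Rabs_pos_eq l) by exact Hl.
      assert (Hp : l * Rabs (p k) <= l * C)
        by (apply Rmult_le_compat_l; [exact Hl | apply Hpts; left; reflexivity]).
      assert (Hrest := IH pts HC (fun q Hq => Hpts q (or_intror Hq)) Hlam').
      lra.
Qed.

Lemma polytope_bounded d P :
  is_polytope d P -> exists M, 0 <= M /\ forall x, P x -> bounded_by d M x.
Proof.
  intros [pts Hpts]. destruct (points_bounded d pts) as [M [HM Hbd]].
  exists M. split; [exact HM|].
  intros x Hx k Hk. apply Hpts in Hx. destruct Hx as [lam [_ [Hnn [Hsum Hco]]]].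
  rewrite Hco by exact Hk.
  eapply Rle_trans; [apply (hull_coord_bound k M lam pts HM); auto|].
  - intros p Hp. apply Hbd; assumption.
  - rewrite Hsum. lra.
Qed.

Definition grid_index (th y : R) : Z := (up (y / th) - 1)%Z.

Lemma grid_index_near th y : 0 < th -> Rabs (IZR (grid_index th y) * th - y) < th.
Proof.
  intros Hth. unfold grid_index. rewrite minus_IZR.
  destruct (archimed (y / th)) as [Hup1 Hup2].
  replace ((IZR (up (y / th)) - 1) * th - y)
    with ((IZR (up (y / th)) - y / th - 1) * th) by (field; lra).
  rewrite Rabs_mult, (Rabs_pos_eq th) by lra.
  assert (Hfrac : Rabs (IZR (up (y / th)) - y / th - 1) < 1) by (apply Rabs_def1; lra).
  nra.
Qed.

Section DenseDilations.

Variable D : R -> Prop.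
Hypothesis HD_pos : forall s, D s -> 0 < s.
Hypothesis HD_dense : forall u v, 0 <= u -> u < v -> exists s, D s /\ u < s /\ s < v.

Lemma dense_inv_between N rho :
  0 < N -> 0 < rho -> exists s, D s /\ N < / s < N + rho.
Proof.
  intros HN Hrho.
  destruct (HD_dense (/ (N + rho)) (/ N)) as [s [Ds [Hlo Hhi]]].
  - left; apply Rinv_0_lt_compat; lra.
  - apply Rinv_lt_contravar; nra.
  - assert (Hs : 0 < s) by (apply HD_pos; exact Ds).
    exists s. split; [exact Ds|]. split.
    + rewrite <- (Rinv_inv N). apply Rinv_lt_contravar; [|exact Hhi].
      apply Rmult_lt_0_compat; [exact Hs | apply Rinv_0_lt_compat; exact HN].
    + rewrite <- (Rinv_inv (N + rho)). apply Rinv_lt_contravar; [|exact Hlo].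
      apply Rmult_lt_0_compat; [apply Rinv_0_lt_compat; lra | exact Hs].
Qed.

(* With 1/s = N + th for an integer N, the point u/s - N u equals th u: the
   translates by N u of the s-dilated lattice contain the grid of mesh th. *)
Lemma dilated_grid_near d M y rho :
  0 <= M -> 0 < rho ->
  exists s (u w : vecZ), D s /\ 2 * M * s < 1 /\ canonZ d u /\ canonZ d w /\
    in_cube d y rho (fun k => IZR (u k) / s - IZR (w k)).
Proof.
  intros HM Hrho.
  set (N := up (2 * M)). destruct (archimed (2 * M)) as [HN _]. fold N in HN.
  destruct (dense_inv_between (IZR N) rho ltac:(lra) Hrho) as [s [Ds [Hlo Hhi]]].
  assert (Hs : 0 < s) by (apply HD_pos; exact Ds).
  set (th := / s - IZR N).
  set (u := fun k => if (k <? d)%nat then grid_index th (y k) else 0%Z).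
  exists s, u, (fun k => (u k * N)%Z). split; [exact Ds|]. split; [|split; [|split]].
  - assert (HsN : s * IZR N < 1).
    { replace 1 with (s * / s) by (field; lra). apply Rmult_lt_compat_l; assumption. }
    nra.
  - intros k Hk. unfold u. destruct (Nat.ltb_spec k d); [lia | reflexivity].
  - intros k Hk. unfold u. destruct (Nat.ltb_spec k d); [lia | reflexivity].
  - intros k Hk.
    replace (IZR (u k) / s - IZR (u k * N)) with (IZR (u k) * th)
      by (unfold th; rewrite mult_IZR; field; lra).
    unfold u. destruct (Nat.ltb_spec k d); [|lia].
    assert (Hgrid := grid_index_near th (y k) ltac:(unfold th; lra)).
    unfold th in *. lra.
Qed.

End DenseDilations.

Lemma scale_translate_iff d s P w v :
  scale d s (translate d P w) v <->
  exists x, P x /\ forall k, (k < d)%nat -> v k = s * (x k + IZR (w k)).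
Proof.
  split.
  - intros [x1 [[x [Hx Hx1]] Hv]]. exists x. split; [exact Hx|].
    intros k Hk. rewrite Hv, Hx1 by exact Hk. reflexivity.
  - intros [x [Hx Hv]]. exists (fun k => x k + IZR (w k)). split.
    + exists x. split; [exact Hx | reflexivity].
    + exact Hv.
Qed.

Lemma lattice_count_empty d Q s N :
  lattice_count d Q s N -> (forall z, canonZ d z -> ~ scale d s Q (toR z)) -> N = 0%nat.
Proof.
  intros [l [_ [<- Hl]]] Hempty. destruct l as [|z l]; [reflexivity|].
  destruct (proj1 (Hl z) (or_introl eq_refl)) as [Hz HzQ]. exfalso. exact (Hempty z Hz HzQ).
Qed.

Lemma lattice_count_nonempty d Q s N z :
  lattice_count d Q s N -> canonZ d z -> scale d s Q (toR z) -> N <> 0%nat.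
Proof.
  intros [l [_ [<- Hl]]] Hz HzQ. destruct l as [|z' l]; [|discriminate].
  destruct (proj2 (Hl z) (conj Hz HzQ)).
Qed.

(* Both values lie in an interval of length 2 M s < 1 around s c. *)
Lemma dilate_int_coord_unique s M x1 x2 c (m1 m2 : Z) :
  0 < s -> 2 * M * s < 1 -> Rabs x1 <= M -> Rabs x2 <= M ->
  IZR m1 = s * (x1 + c) -> IZR m2 = s * (x2 + c) -> x1 = x2.
Proof.
  intros Hs HMs Hx1 Hx2 Hm1 Hm2.
  assert (Hdiff : IZR (m1 - m2) = s * (x1 - x2)) by (rewrite minus_IZR, Hm1, Hm2; ring).
  assert (Hsmall : Rabs (IZR (m1 - m2)) < 1).
  { rewrite Hdiff, Rabs_mult, (Rabs_pos_eq s) by lra.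
    assert (Htri : Rabs (x1 - x2) <= 2 * M).
    { pose proof (Rabs_triang x1 (- x2)) as Htri. rewrite Rabs_Ropp in Htri.
      unfold Rminus. lra. }
    nra. }
  rewrite <- abs_IZR in Hsmall. apply lt_IZR in Hsmall.
  replace (m1 - m2)%Z with 0%Z in Hdiff by lia. nra.
Qed.

Lemma admissible_le d n a D f b b' :
  (forall s, D s -> 0 < s) ->
  (forall u v, 0 <= u -> u < v -> exists s, D s /\ u < s /\ s < v) ->
  admissible d n a D f b -> admissible d n a D f b' ->
  forall i, (i < n)%nat -> b' i <= b i.
Proof.
  intros HD_pos HD_dense [Hpol [_ [Hcnt _]]] [Hpol' [Hfd' [Hcnt' Hface']]] i Hi.
  apply Rnot_lt_le. intros Hlt.
  destruct (Hface' i Hi) as [_ [x' [Hx' Hx'i]]].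
  destruct (polytope_bounded d _ Hpol) as [M [HM HPM]].
  destruct (polytope_bounded d _ Hpol') as [M' [HM' HPM']].
  destruct (full_dim_cube_above d _ (toR (a i)) x' (b i)
              (Hpoly_convex d n a b') Hfd' Hx' ltac:(lra))
    as [y [rho [Hrho Hcube]]].
  destruct (dilated_grid_near D HD_pos HD_dense d (M + M') y rho ltac:(lra) Hrho)
    as [s [u [w [Ds [HMs [Hu [Hw Hnear]]]]]]].
  assert (Hs : 0 < s) by (apply HD_pos; exact Ds).
  set (z := fun k => IZR (u k) / s - IZR (w k)).
  destruct (Hcube z Hnear) as [Hz' Hzi].
  destruct (Hcnt w Hw s Ds) as [N [HN HfN]].
  destruct (Hcnt' w Hw s Ds) as [N' [HN' HfN']].
  assert (HN0 : N = 0%nat).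
  { apply (lattice_count_empty d _ s N HN). intros v _ Hv.
    apply scale_translate_iff in Hv. destruct Hv as [x [Hx Hxv]].
    assert (Hxz : forall k, (k < d)%nat -> x k = z k).
    { intros k Hk.
      apply (dilate_int_coord_unique s (M + M') (x k) (z k) (IZR (w k)) (v k) (u k) Hs HMs).
      - specialize (HPM x Hx k Hk). lra.
      - specialize (HPM' z Hz' k Hk). lra.
      - apply Hxv; exact Hk.
      - unfold z. field. lra. }
    specialize (Hx i Hi). rewrite (ip_ext d _ x z Hxz) in Hx. lra. }
  apply (lattice_count_nonempty d _ s N' u HN' Hu).
  - apply scale_translate_iff. exists z. split; [exact Hz'|].
    intros k _. unfold toR, z. field. lra.
  - apply INR_eq. rewrite <- HfN', HfN, HN0. reflexivity.
Qed.

Theorem theorem4p3 (d n : nat) (a : nat -> vecZ)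
  (Ha_prim : forall i, (i < n)%nat -> primitive_vec d (a i))
  (Ha_dist : forall i j, (i < n)%nat -> (j < n)%nat -> i <> j ->
               exists k, (k < d)%nat /\ a i k <> a j k)
  (D : R -> Prop)
  (HD_pos : forall s, D s -> 0 < s)
  (HD_dense : forall u v, 0 <= u -> u < v -> exists s, D s /\ u < s /\ s < v)
  (f : vecZ -> R -> R)
  (b b' : nat -> R) :
  admissible d n a D f b -> admissible d n a D f b' ->
  forall i, (i < n)%nat -> b i = b' i.
Proof.
  intros Hb Hb' i Hi. apply Rle_antisym.
  - exact (admissible_le d n a D f b' b HD_pos HD_dense Hb' Hb i Hi).
  - exact (admissible_le d n a D f b b' HD_pos HD_dense Hb Hb' i Hi).
Qed.
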